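(* Let $I$ be a squarefree monomial ideal in a polynomial ring $S$ over a field that is nearly a complete intersection (NCI). If $m_1$ and $m_2$ are two distinct minimal monomial generators of $I$, then $\gcd(m_1,m_2)$ has degree at most $1$.
   Context: An ideal is a complete intersection (CI) if it is generated by a regular sequence. The support of a monomial ideal is the set of variables appearing in at least one minimal monomial generator. For a squarefree monomial ideal $I$ and a variable $x$, $I(x=1)$ denotes the ideal generated by the monomials obtained from the minimal monomial generators of $I$ by setting $x = 1$. A squarefree monomial ideal $I$ is NCI if it is generated in degree at least two, is not a CI, and for each variable $x$ in the support of $I$, $I(x=1)$ is a CI. *)

From HB Require Import structures.
From mathcomp Require Import all_boot all_order all_algebra.
From mathcomp Require Export mpoly.
Set Implicit Arguments. Unset Strict Implicit. Unset Printing Implicit Defensive.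
Import GRing.Theory.
Local Open Scope ring_scope.

Section Defs.
Variables (k : fieldType) (n : nat).
Local Notation S := {mpoly k[n]}.

Definition ideal_gen (P : S -> Prop) : S -> Prop :=
  fun p => exists s : seq (S * S),
    (forall x, x \in s -> P x.2) /\ p = \sum_(x <- s) x.1 * x.2.

Definition ideal_seq (f : seq S) : S -> Prop :=
  ideal_gen (fun g => g \in f).

(* f = [:: f_0; ...; f_{r-1}] is a regular sequence in S: the quotient
   S/(f) is nonzero and each f_i is a nonzerodivisor on S/(f_0,...,f_{i-1}). *)
Definition regular_seq (f : seq S) : Prop :=
  ~ ideal_seq f 1 /\
  forall i : nat, (i < size f)%N ->
    forall g : S, ideal_seq (take i f) (nth 0 f i * g) -> ideal_seq (take i f) g.

Definition is_CI (J : S -> Prop) : Prop :=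
  exists f : seq S, regular_seq f /\ forall p, J p <-> ideal_seq f p.

Definition mdiv (a b : 'X_{1..n}) : bool := [forall i, (a i <= b i)%N].

Definition min_mon_gen (J : S -> Prop) (m : 'X_{1..n}) : Prop :=
  J 'X_[m] /\ forall m' : 'X_{1..n}, mdiv m' m -> J 'X_[m'] -> m' = m.

Definition squarefree_mon (m : 'X_{1..n}) : bool := [forall i, (m i <= 1)%N].

Definition mon_ideal (G : seq 'X_{1..n}) : S -> Prop :=
  ideal_gen (fun g => exists2 m, m \in G & g = 'X_[m]).

Definition in_support (J : S -> Prop) (i : 'I_n) : Prop :=
  exists m, min_mon_gen J m /\ (0 < m i)%N.

Definition mon_set1 (i : 'I_n) (m : 'X_{1..n}) : 'X_{1..n} :=
  [multinom (if j == i then 0%N else m j) | j < n].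

(* I(x_i = 1): generated by the minimal monomial generators of J with x_i := 1 *)
Definition ideal_set1 (J : S -> Prop) (i : 'I_n) : S -> Prop :=
  ideal_gen (fun g => exists2 m, min_mon_gen J m & g = 'X_[mon_set1 i m]).

Definition is_NCI (J : S -> Prop) : Prop :=
  [/\ forall m, min_mon_gen J m -> (2 <= mdeg m)%N,
      ~ is_CI J &
      forall i, in_support J i -> is_CI (ideal_set1 J i)].

Definition gcd_deg (a b : 'X_{1..n}) : nat := (\sum_(i < n) minn (a i) (b i))%N.

End Defs.

(* If two variables [x] and [y] divided both [m1] and [m2], then in the
   complete intersection I(x = 1) the distinct minimal generators [m1/x] and
   [m2/x] would still share [y].  This is impossible: if the squarefree
   monomial ideal with minimal generators [W] is generated by a regular
   sequence [f], then |W| <= |f| <= |P| for every minimal set [P] of variables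
   meeting all of [W].  The first inequality compares coefficients at the
   monomials of [W]; the second evaluates the syzygies of [f], whose
   coefficients lie in the ideal because [f] is regular, at the point
   [x_j = 0] for [j] in [P] and [x_j = 1] otherwise.  Yet [y], together with
   one variable of each generator that [y] does not divide, meets all of [W]
   with fewer than |W| variables. *)

From mathcomp Require Import all_boot all_algebra.
From mathcomp Require Import mpoly.

Set Implicit Arguments. Unset Strict Implicit. Unset Printing Implicit Defensive.
Import GRing.Theory.
Local Open Scope ring_scope.

Section Ideals.
Variables (k : fieldType) (n : nat).
Local Notation S := {mpoly k[n]}.
Implicit Types (P Q J : S -> Prop) (f : seq S) (a g p q : S).

Lemma ideal_gen0 P : ideal_gen P 0.
Proof. by exists [::]; rewrite big_nil. Qed.

Lemma ideal_genD P p q : ideal_gen P p -> ideal_gen P q -> ideal_gen P (p + q).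
Proof.
move=> [s [sP ->]] [t [tP ->]]; exists (s ++ t); split; last by rewrite big_cat.
by move=> x; rewrite mem_cat => /orP[/sP|/tP].
Qed.

Lemma ideal_genMl P a p : ideal_gen P p -> ideal_gen P (a * p).
Proof.
move=> [s [sP ->]]; exists [seq (a * x.1, x.2) | x <- s]; split.
  by move=> _ /mapP[x /sP xP ->].
by rewrite big_map mulr_sumr; apply: eq_bigr => x _; rewrite mulrA.
Qed.

Lemma ideal_genB P p q : ideal_gen P p -> ideal_gen P q -> ideal_gen P (p - q).
Proof. by move=> Pp Pq; rewrite -mulN1r; apply/ideal_genD/ideal_genMl. Qed.

Lemma ideal_gen_base P g : P g -> ideal_gen P g.
Proof.
move=> Pg; exists [:: (1, g)]; split; first by move=> x /[!inE] /eqP->.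
by rewrite big_seq1 mul1r.
Qed.

Lemma ideal_gen_sum P (I : eqType) (r : seq I) (F : I -> S) :
  (forall i, i \in r -> ideal_gen P (F i)) -> ideal_gen P (\sum_(i <- r) F i).
Proof.
elim: r => [|x r IHr] rP; first by rewrite big_nil; apply: ideal_gen0.
rewrite big_cons; apply: ideal_genD; first by apply: rP; rewrite mem_head.
by apply: IHr => i ir; apply: rP; rewrite inE ir orbT.
Qed.

Lemma ideal_gen_sub P Q p :
  (forall g, P g -> ideal_gen Q g) -> ideal_gen P p -> ideal_gen Q p.
Proof.
move=> PQ [s [sP ->]]; apply: ideal_gen_sum => x xs.
exact/ideal_genMl/PQ/sP.
Qed.

Lemma eq_ideal_gen P Q p :
  (forall g, P g <-> Q g) -> ideal_gen P p <-> ideal_gen Q p.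
Proof. by move=> PQ; split; apply: ideal_gen_sub => g /PQ; apply: ideal_gen_base. Qed.

Lemma ideal_seqP f p :
  ideal_seq f p <-> exists c : nat -> S, p = \sum_(i < size f) c i * f`_i.
Proof.
split=> [[s [sf ->]] | [c ->]]; last first.
  by apply: ideal_gen_sum => i _; apply/ideal_genMl/ideal_gen_base/mem_nth.
elim: s sf => [|[a g] s IHs] sf.
  by exists (fun=> 0); rewrite big_nil big1 // => i _; rewrite mul0r.
rewrite big_cons; have [|c ->] := IHs.
  by move=> x xs; apply: sf; rewrite inE xs orbT.
have /(nthP 0)[j jf <-] := sf _ (mem_head _ _).
exists (fun i => c i + (i == j)%:R * a); rewrite addrC /=.
under [RHS]eq_bigr do rewrite mulrDl; rewrite big_split /=; congr (_ + _).
rewrite (bigD1 (Ordinal jf)) //= eqxx mul1r big1 ?addr0 // => i.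
by rewrite -val_eqE /= => /negbTE->; rewrite !mul0r.
Qed.

Lemma ideal_seq_takeP f m p : (m <= size f)%N ->
  ideal_seq (take m f) p <-> exists c : nat -> S, p = \sum_(i < m) c i * f`_i.
Proof.
move=> mf; rewrite ideal_seqP size_takel //.
have E c : \sum_(i < m) c i * (take m f)`_i = \sum_(i < m) c i * f`_i.
  by apply: eq_bigr => i _; rewrite nth_take.
by split=> -[c ->]; exists c; rewrite E.
Qed.

Lemma ideal_seq_take_mono f m1 m2 p : (m1 <= m2)%N ->
  ideal_seq (take m1 f) p -> ideal_seq (take m2 f) p.
Proof.
move=> m12; apply: ideal_gen_sub => g; rewrite -(take_takel f m12) => /mem_take.
exact: ideal_gen_base.
Qed.

(* By induction on [m]: regularity puts [c m] in (f_0, ..., f_(m-1)), and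
   substituting it leaves a relation of length [m]. *)
Lemma regular_seq_syzygy f m (c : nat -> S) :
  regular_seq f -> (m <= size f)%N -> \sum_(i < m) c i * f`_i = 0 ->
  forall i, (i < m)%N -> ideal_seq (take m f) (c i).
Proof.
case=> _ regf; elim: m c => [//|m IHm] c /[dup] mf /ltnW mf' /eqP.
rewrite big_ord_recr /= addrC addr_eq0 => /eqP cm_rel i.
have cm_in : ideal_seq (take m f) (c m).
  apply: regf => //; rewrite mulrC cm_rel -mulN1r.
  by apply/ideal_genMl/(ideal_seq_takeP _ mf'); exists c.
have [d cmE] := (ideal_seq_takeP _ mf').1 cm_in.
have fm_in : ideal_seq (take m.+1 f) f`_m.
  by apply: ideal_gen_base; rewrite (take_nth 0 mf) mem_rcons mem_head.
rewrite ltnS leq_eqVlt => /predU1P[-> | im].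
  exact: ideal_seq_take_mono cm_in.
have rel : \sum_(j < m) (c j + d j * f`_m) * f`_j = 0.
  rewrite (eq_bigr (fun j : 'I_m => c j * f`_j + d j * f`_j * f`_m)); last first.
    by move=> j _; rewrite mulrDl mulrAC.
  by rewrite big_split /= -mulr_suml -cmE cm_rel addrN.
have := ideal_seq_take_mono (leqnSn m) (IHm (fun j => c j + d j * f`_m) mf' rel i im).
by rewrite -{2}[c i](addrK (d i * f`_m)); move/ideal_genB; apply; apply: ideal_genMl.
Qed.

Lemma meval_ideal_seq (v : 'I_n -> k) f p :
  (forall g, g \in f -> g.@[v] = 0) -> ideal_seq f p -> p.@[v] = 0.
Proof.
move=> fv [s [sf ->]]; rewrite rmorph_sum big1_seq // => x /andP[_ xs].
by rewrite rmorphM /= (fv _ (sf x xs)) mulr0.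
Qed.

Lemma eq_is_CI J (J' : S -> Prop) :
  (forall p, J p <-> J' p) -> is_CI J -> is_CI J'.
Proof. by move=> JJ' [f [regf Jf]]; exists f; split=> // p; rewrite -JJ'. Qed.

End Ideals.

Section Monomials.
Variable n : nat.
Implicit Types (W G : seq 'X_{1..n}) (m u v w : 'X_{1..n}) (P C : {set 'I_n}).

Lemma lepm_anti u v : (u <= v)%MM -> (v <= u)%MM -> u = v.
Proof.
by move=> /mnm_lepP uv /mnm_lepP vu; apply/mnmP => i; apply/eqP; rewrite eqn_leq uv vu.
Qed.

Lemma submm m : (m - m)%MM = 0%MM.
Proof. by apply/mnmP => i; rewrite !mnmE subnn. Qed.

Lemma mdeg_ltn u v : (u <= v)%MM -> u != v -> (mdeg u < mdeg v)%N.
Proof.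
move=> uv; rewrite -(submK uv) mdegD -{1}[mdeg u]add0n ltn_add2r lt0n mdeg_eq0.
by apply: contra => /eqP->; rewrite add0m.
Qed.

Lemma mdivE u v : mdiv u v = (u <= v)%MM.
Proof. exact/forallP/mnm_lepP. Qed.

Definition minimal_in W m := all (fun w => (w <= m)%MM ==> (w == m)) W.

Definition minimal_elems W := undup [seq m <- W | minimal_in W m].

Lemma mem_minimal_elems W m : (m \in minimal_elems W) = (m \in W) && minimal_in W m.
Proof. by rewrite mem_undup mem_filter andbC. Qed.

Lemma minimal_elems_antichain W :
  {in minimal_elems W &, forall u v, (u <= v)%MM -> u = v}.
Proof.
move=> u v; rewrite !mem_minimal_elems => /andP[uW _] /andP[_ /allP minv] uv.
by apply/eqP; move: (minv u uW); rewrite uv.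
Qed.

Lemma exists_minimal_below W w :
  w \in W -> exists2 m, m \in minimal_elems W & (m <= w)%MM.
Proof.
elim: (mdeg w).+1 {-2}w (ltnSn (mdeg w)) => // d IHd {}w wd wW.
have [minw|] := boolP (minimal_in W w).
  by exists w; rewrite ?mem_minimal_elems ?wW ?lepm_refl.
case/allPn => u uW; rewrite negb_imply => /andP[uw uNw].
have [m mmin mu] := IHd u (leq_trans (mdeg_ltn uw uNw) wd) uW.
by exists m => //; apply: lepm_trans mu uw.
Qed.

Definition covers P W := all (fun w => [exists j in P, 0 < w j]%N) W.

Lemma coversP P W :
  reflect {in W, forall w, exists2 j, j \in P & (0 < w j)%N} (covers P W).
Proof.
apply: (iffP allP) => cov w /cov; first by case/existsP => j /andP[]; exists j.
by case=> j jP wj; apply/existsP; exists j; rewrite jP.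
Qed.

Definition mnmC P : 'X_{1..n} := [multinom (j \notin P : nat) | j < n].

Lemma uncovered_le_mnmC W P j : {in W, forall w, squarefree_mon w} ->
  ~~ covers (P :\ j) W -> exists2 w, w \in W & (w <= U_(j) + mnmC P)%MM.
Proof.
move=> sqW /allPn[w wW wNcov]; exists w => //; apply/mnm_lepP => i.
have wi1 : (w i <= 1)%N by move/forallP: (sqW w wW).
rewrite mnmDE mnm1E mnmE; case: (eqVneq j i) => [_|ji] /=.
  exact: leq_trans wi1 (leq_addr _ _).
case: (boolP (i \in P)) => iP /=; last exact: wi1.
rewrite leqn0 eqn0Ngt; apply: contra wNcov => wi.
by apply/existsP; exists i; rewrite !inE iP wi eq_sym ji.
Qed.

Lemma exists_minimal_subcover W C : covers C W -> exists P,
  [/\ P \subset C, covers P W & {in P, forall j, ~~ covers (P :\ j) W}].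
Proof.
move=> coverC; pose subcover (Q : {set 'I_n}) := (Q \subset C) && covers Q W.
have : subcover C by rewrite /subcover subxx.
case/(arg_minnP (fun Q : {set 'I_n} => #|Q|)) => P /andP[PC coverP] minP.
exists P; split=> // j jP; apply/negP => coverPj.
have := minP (P :\ j); rewrite /subcover coverPj (subset_trans (subsetDl _ _) PC).
move=> /(_ isT).
by rewrite (cardsD1 j P) jP add1n ltnn.
Qed.

Lemma exists_small_cover W u v y :
  {in W &, forall a b, (a <= b)%MM -> a = b} ->
  u \in W -> v \in W -> u != v -> (0 < u y)%N -> (0 < v y)%N ->
  exists C, covers C W /\ (#|C| < size W)%N.
Proof.
move=> antiW uW vW uv uy vy; pose var w := odflt y [pick i | 0 < w i]%N.
pose through_y w := (0 < w y)%N.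
exists [set x in y :: [seq var w | w <- W & ~~ through_y w]]; split.
  apply/coversP => w wW; have [wy|wNy] := boolP (through_y w).
    by exists y; rewrite ?inE ?eqxx.
  exists (var w); first by rewrite inE; apply/predU1r/map_f; rewrite mem_filter wNy.
  rewrite /var; case: pickP => //= w0; case/negP: wNy.
  suff /(antiW _ _ wW uW) -> : (w <= u)%MM by [].
  by apply/mnm_lepP => i; move: (w0 i) => /= /negbT; rewrite -eqn0Ngt => /eqP->.
have two : (2 <= count through_y W)%N.
  rewrite -size_filter (_ : 2 = size [:: u; v])%N //.
  apply: uniq_leq_size => [|x]; first by rewrite /= inE uv.
  by rewrite !inE mem_filter => /orP[] /eqP->; rewrite ?uW ?vW /through_y ?uy ?vy.
rewrite cardsE (leq_ltn_trans (card_size _)) //= size_map size_filter.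
by rewrite -(count_predC through_y W) -addn2 addnC leq_add2r.
Qed.

Lemma mon_set1E x m i : mon_set1 x m i = if i == x then 0%N else m i.
Proof. by rewrite mnmE. Qed.

Lemma squarefree_mon_set1 x m : squarefree_mon m -> squarefree_mon (mon_set1 x m).
Proof. by move=> /forallP sqm; apply/forallP => i; rewrite mon_set1E; case: ifP. Qed.

Lemma mon_set1_inj x u v : u x = v x -> mon_set1 x u = mon_set1 x v -> u = v.
Proof.
move=> uvx uv; apply/mnmP => i; have := congr1 (fun m : 'X_{1..n} => m i) uv.
by rewrite /= !mon_set1E; case: eqP => [->|].
Qed.

Definition set1_gens x G := [seq mon_set1 x m | m <- G & minimal_in G m].

Lemma mem_set1_gens x G m :
  m \in G -> minimal_in G m -> mon_set1 x m \in set1_gens x G.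
Proof. by move=> mG minm; apply: map_f; rewrite mem_filter minm. Qed.

Lemma squarefree_set1_gens x G : {in G, forall m, squarefree_mon m} ->
  {in set1_gens x G, forall w, squarefree_mon w}.
Proof.
move=> sqG _ /mapP[m + ->]; rewrite mem_filter => /andP[_ /sqG].
exact: squarefree_mon_set1.
Qed.

Lemma minimal_in_set1_gens x G m : {in G, forall g, squarefree_mon g} ->
  minimal_in G m -> (0 < m x)%N -> minimal_in (set1_gens x G) (mon_set1 x m).
Proof.
move=> sqG /allP minm mx; apply/allP => _ /mapP[g + ->].
rewrite mem_filter => /andP[_ gG]; apply/implyP => /mnm_lepP gm.
suff /(implyP (minm g gG)) /eqP-> : (g <= m)%MM by [].
apply/mnm_lepP => i; case: (eqVneq i x) => [->|ix].
  by apply: leq_trans mx; move/forallP: (sqG g gG).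
by move: (gm i); rewrite !mon_set1E (negbTE ix).
Qed.

Lemma gcd_deg_le1 u v : squarefree_mon u ->
  (forall i j, (0 < minn (u i) (v i))%N -> (0 < minn (u j) (v j))%N -> i = j) ->
  (gcd_deg u v <= 1)%N.
Proof.
move=> /forallP squ common; rewrite /gcd_deg.
case: (pickP (fun i => 0 < minn (u i) (v i))%N) => [i ci|none].
  rewrite (bigD1 i) //= big1 ?addn0; first exact: leq_trans (geq_minl _ _) (squ i).
  move=> j ji; apply/eqP; rewrite -leqn0 leqNgt; apply: contra ji => cj.
  by rewrite (common j i).
by rewrite big1 // => i _; apply/eqP; rewrite -leqn0 leqNgt none.
Qed.

End Monomials.

Section MonomialIdeals.
Variables (k : fieldType) (n : nat).
Local Notation S := {mpoly k[n]}.
Implicit Types (W : seq 'X_{1..n}) (m u v w : 'X_{1..n}) (f : seq S) (p q : S).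

Lemma mcoeffMX_lepm p w m :
  (p * 'X_[w])@_m = if (w <= m)%MM then p@_(m - w) else 0.
Proof.
case: ifP => [wm|wNm]; first by rewrite -{1}(submK wm) addmC mcoeffMX.
apply: memN_msupp_eq0; rewrite (perm_mem (msuppMX p w)).
by apply/mapP => -[m' _ mE]; rewrite mE lem_addr in wNm.
Qed.

Lemma mon_idealP W p : mon_ideal W p <->
  exists c : nat -> S, p = \sum_(l < size W) c l * 'X_[nth 0%MM W l].
Proof.
have XW (g : S) : (exists2 w, w \in W & g = 'X_[w]) <-> g \in [seq 'X_[w] | w <- W].
  by split=> [[w wW ->]|/mapP[w wW ->]]; [apply: map_f | exists w].
apply: (iff_trans (eq_ideal_gen p XW) (iff_trans (ideal_seqP _ p) _)).
have E (c : nat -> S) :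
    \sum_(l < size [seq 'X_[w] | w <- W]) c l * [seq 'X_[w] | w <- W]`_l
    = \sum_(l < size W) c l * 'X_[nth 0%MM W l] :> S.
  by rewrite size_map; apply: eq_bigr => l _; rewrite (nth_map 0%MM).
by split=> -[c ->]; exists c; rewrite E.
Qed.

Lemma mon_idealX W w m : w \in W -> (w <= m)%MM -> mon_ideal W ('X_[m] : S).
Proof.
move=> wW wm; rewrite -(submK wm) mpolyXD.
by apply/ideal_genMl/ideal_gen_base; exists w.
Qed.

Lemma mon_ideal_coeff W p m :
  mon_ideal W p -> p@_m != 0 -> exists2 w, w \in W & (w <= m)%MM.
Proof.
move=> [s [sW ->]]; elim: s sW => [|[a g] s IHs] sW.
  by rewrite big_nil mcoeff0 eqxx.
rewrite big_cons mcoeffD /=; have [w wW /= ->] := sW _ (mem_head _ _).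
rewrite mcoeffMX_lepm; case: ifP => [wm _|_]; first by exists w.
by rewrite add0r; apply: IHs => x xs; apply: sW; rewrite inE xs orbT.
Qed.

Lemma mon_idealXP W m :
  mon_ideal W ('X_[m] : S) <-> exists2 w, w \in W & (w <= m)%MM.
Proof.
split=> [/mon_ideal_coeff|[w wW wm]]; last exact: mon_idealX wW wm.
by apply; rewrite mcoeffX eqxx oner_neq0.
Qed.

(* The constant terms of the transition matrices between the monomial
   generators and [f] form a left inverse, because an antichain admits no
   cancellation among its members. *)
Lemma size_antichain_le_generators W f :
  uniq W -> {in W &, forall u v, (u <= v)%MM -> u = v} ->
  (forall p, mon_ideal W p <-> ideal_seq f p) -> (size W <= size f)%N.
Proof.
move=> uW antiW Wf; pose X l : S := 'X_[nth 0%MM W l].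
have /fin_all_exists[a fE] : forall i : 'I_(size f),
    exists a : nat -> S, f`_i = \sum_(l < size W) a l * X l.
  by move=> i; apply/mon_idealP/Wf/ideal_gen_base/mem_nth.
have /fin_all_exists[b XE] : forall l : 'I_(size W),
    exists b : nat -> S, X l = \sum_(i < size f) b i * f`_i.
  move=> l; apply/ideal_seqP/Wf.
  exact: mon_idealX (mem_nth _ (ltn_ord l)) (lepm_refl _).
have coefX q (l l' : 'I_(size W)) :
    (q * X l)@_(nth 0%MM W l') = if l == l' then q@_0 else 0.
  rewrite mcoeffMX_lepm; case: eqVneq => [->|ll']; first by rewrite lepm_refl submm.
  case: ifP => // le_ll'; case/eqP: ll'; apply/val_inj/eqP.
  rewrite -(nth_uniq 0%MM _ _ uW) ?ltn_ord //; apply/eqP.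
  exact: antiW (mem_nth _ (ltn_ord _)) (mem_nth _ (ltn_ord _)) le_ll'.
apply: (@mulmx1_min _ _ _ (\matrix_(l, i) (b l i)@_0) (\matrix_(i, l) (a i l)@_0)).
apply/matrixP => l l'; rewrite !mxE.
have := congr1 (mcoeff (nth 0%MM W l')) (XE l).
rewrite mcoeffX nth_uniq // => ->; rewrite raddf_sum; apply: eq_bigr => i _.
rewrite fE mulr_sumr raddf_sum /=.
under eq_bigr do rewrite mulrA coefX.
by rewrite -big_mkcond big_pred1_eq rmorphM !mxE.
Qed.

(* Write [f_i = sum_j a_ij x_j] over the [j] in [P], which covers [W], and
   [x_j x^(mnmC P) = sum_l b_jl f_l].  The relation
   [x^(mnmC P) f_i = sum_l (a b)_il f_l] has its coefficients in the ideal of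
   [f], contained in (x_j : j in P), so they vanish at [v]; as [x^(mnmC P)]
   evaluates to 1 there, [a(v) b(v) = 1]. *)
Lemma size_regular_le_cover W f (P : {set 'I_n}) :
  regular_seq f -> (forall p, mon_ideal W p <-> ideal_seq f p) ->
  {in W, forall w, exists2 j, j \in P & (0 < w j)%N} ->
  {in P, forall j, exists2 w, w \in W & (w <= U_(j) + mnmC P)%MM} ->
  (size f <= #|P|)%N.
Proof.
move=> regf Wf coverP witnessP.
pose xP : seq S := [seq 'X_j | j <- enum P].
pose c : S := 'X_[mnmC P].
pose v (j : 'I_n) : k := (j \notin P)%:R.
have W_xP p : mon_ideal W p -> ideal_seq xP p.
  apply: ideal_gen_sub => _ [w /coverP[j jP wj] ->].
  have jw : (U_(j) <= w)%MM by apply/mnm_lepP => i; rewrite mnm1E; case: eqP => [<-|].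
  rewrite -(submK jw) mpolyXD; apply/ideal_genMl/ideal_gen_base.
  by apply: map_f; rewrite mem_enum.
have f_v p : ideal_seq f p -> p.@[v] = 0.
  move=> /Wf /W_xP; apply: meval_ideal_seq => _ /mapP[j jP ->].
  by rewrite mevalXU /v -mem_enum jP.
have c_v : c.@[v] = 1.
  by rewrite mevalX big1 // => j _; rewrite /v mnmE; case: (j \in P).
have /fin_all_exists[a fE] : forall i : 'I_(size f),
    exists a : nat -> S, f`_i = \sum_(j < size xP) a j * xP`_j.
  by move=> i; apply/ideal_seqP/W_xP/Wf/ideal_gen_base/mem_nth.
have /fin_all_exists[b xPE] : forall j : 'I_(size xP),
    exists b : nat -> S, xP`_j * c = \sum_(l < size f) b l * f`_l.
  move=> j; apply/ideal_seqP/Wf.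
  have /mapP[e eP ->] := mem_nth 0 (ltn_ord j).
  rewrite mem_enum in eP; have [w wW wle] := witnessP e eP.
  by rewrite /c -mpolyXD; apply: mon_idealX wW wle.
have -> : #|P| = size xP by rewrite size_map cardE.
apply: (@mulmx1_min _ _ _ (\matrix_(i, j) (a i j).@[v]) (\matrix_(j, l) (b j l).@[v])).
apply/matrixP => i l; rewrite !mxE.
pose co (l' : nat) := c *+ (i == l' :> nat) - \sum_(j < size xP) a i j * b j l'.
have rel : \sum_(l' < size f) co l' * f`_l' = 0.
  under eq_bigr do rewrite mulrBl mulr_suml.
  rewrite sumrB (bigD1 i) //= eqxx mulr1n big1 ?addr0 => [|l' l'i]; last first.
    by rewrite val_eqE eq_sym (negbTE l'i) mulr0n mul0r.
  apply/eqP; rewrite subr_eq0; apply/eqP.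
  rewrite exchange_big (fE i) mulr_sumr; apply: eq_bigr => j _ /=.
  rewrite mulrCA [c * _]mulrC xPE mulr_sumr; apply: eq_bigr => l' _.
  by rewrite mulrA.
have := regular_seq_syzygy regf (leqnn _) rel (ltn_ord l); rewrite take_size.
move=> /f_v; rewrite rmorphB rmorphMn /= c_v rmorph_sum /= val_eqE.
move=> /eqP; rewrite subr_eq0 => /eqP->; apply: eq_bigr => j _.
by rewrite !mxE rmorphM.
Qed.

Lemma CI_antichain_coprime W u v y : uniq W ->
  {in W &, forall a b, (a <= b)%MM -> a = b} ->
  {in W, forall w, squarefree_mon w} ->
  u \in W -> v \in W -> u != v -> (0 < u y)%N -> (0 < v y)%N ->
  ~ is_CI (@mon_ideal k n W).
Proof.
move=> uniqW antiW sqW uW vW uv uy vy [f [regf Wf]].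
have [C [coverC ltCW]] := exists_small_cover antiW uW vW uv uy vy.
have [P [PC /coversP coverP minP]] := exists_minimal_subcover coverC.
have leWf := size_antichain_le_generators uniqW antiW Wf.
have lefP := size_regular_le_cover regf Wf coverP
  (fun j jP => uncovered_le_mnmC sqW (minP j jP)).
have := leq_ltn_trans (leq_trans leWf (leq_trans lefP (subset_leq_card PC))) ltCW.
by rewrite ltnn.
Qed.

Lemma mon_ideal_minimal_elems W p : mon_ideal (minimal_elems W) p <-> mon_ideal W p.
Proof.
split; apply: ideal_gen_sub => _ [w wW ->].
  apply/ideal_gen_base; exists w => //.
  by move: wW; rewrite mem_minimal_elems => /andP[].
by have [m mmin mw] := exists_minimal_below wW; apply: mon_idealX mmin mw.
Qed.

Lemma CI_squarefree_coprime W u v y : {in W, forall w, squarefree_mon w} ->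
  u \in W -> v \in W -> minimal_in W u -> minimal_in W v -> u != v ->
  (0 < u y)%N -> (0 < v y)%N -> ~ is_CI (@mon_ideal k n W).
Proof.
move=> sqW uW vW minu minv uv uy vy.
move=> /(eq_is_CI (fun p => iff_sym (mon_ideal_minimal_elems W p))).
apply: CI_antichain_coprime uv uy vy.
- exact: undup_uniq.
- exact: minimal_elems_antichain.
- by move=> w; rewrite mem_minimal_elems => /andP[/sqW].
- by rewrite mem_minimal_elems uW.
- by rewrite mem_minimal_elems vW.
Qed.

Lemma min_mon_genP G m :
  min_mon_gen (@mon_ideal k n G) m <-> m \in G /\ minimal_in G m.
Proof.
have gen g : g \in G -> mon_ideal G ('X_[g] : S).
  by move=> gG; apply: mon_idealX gG (lepm_refl g).
split=> [[/mon_idealXP[g gG gm] mmin] | [mG /allP minm]].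
  have gE : g = m by apply: mmin; [rewrite mdivE | apply: gen].
  split; first by rewrite -gE.
  apply/allP => g' g'G; apply/implyP => g'm.
  by rewrite (mmin g') ?mdivE //; apply: gen.
split=> [|m']; first exact: gen.
rewrite mdivE => m'm /mon_idealXP[g gG gm'].
have /eqP gE := implyP (minm g gG) (lepm_trans gm' m'm).
by rewrite gE in gm'; apply: lepm_anti.
Qed.

Lemma ideal_set1E G x p :
  ideal_set1 (@mon_ideal k n G) x p <-> mon_ideal (set1_gens x G) p.
Proof.
apply: eq_ideal_gen => g.
split=> [[m /min_mon_genP[mG minm] ->] | [_ /mapP[m + ->] ->]].
  by exists (mon_set1 x m) => //; apply: mem_set1_gens.
by rewrite mem_filter => /andP[minm mG]; exists m => //; apply/min_mon_genP.
Qed.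

End MonomialIdeals.

Theorem lemma4p1 (k : fieldType) (n : nat) (G : seq 'X_{1..n})
  (HG : forall m, m \in G -> squarefree_mon m)
  (HNCI : is_NCI (@mon_ideal k n G))
  (m1 m2 : 'X_{1..n})
  (H1 : min_mon_gen (@mon_ideal k n G) m1)
  (H2 : min_mon_gen (@mon_ideal k n G) m2)
  (H12 : m1 <> m2) :
  (gcd_deg m1 m2 <= 1)%N.
Proof.
have [G1 min1] := (min_mon_genP k G m1).1 H1.
have [G2 min2] := (min_mon_genP k G m2).1 H2.
apply: gcd_deg_le1 (HG _ G1) _ => x y; rewrite !leq_min => /andP[x1 x2] /andP[y1 y2].
case: (eqVneq x y) => // xy; exfalso.
case: HNCI => _ _ /(_ x (ex_intro _ m1 (conj H1 x1))).
move=> /(eq_is_CI (ideal_set1E G x)).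
have unit_x m : m \in G -> (0 < m x)%N -> m x = 1%N.
  by move=> /HG /forallP /(_ x) mx1 mx; apply/eqP; rewrite eqn_leq mx1.
apply: (CI_squarefree_coprime (y := y) (squarefree_set1_gens (x := x) HG)
  (mem_set1_gens x G1 min1) (mem_set1_gens x G2 min2)).
- exact: minimal_in_set1_gens HG min1 x1.
- exact: minimal_in_set1_gens HG min2 x2.
- have m12x : m1 x = m2 x by rewrite (unit_x _ G1 x1) (unit_x _ G2 x2).
  by apply/eqP => /(mon_set1_inj m12x).
- by rewrite mon_set1E eq_sym (negbTE xy).
- by rewrite mon_set1E eq_sym (negbTE xy).
Qed.
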